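(* Let $d\ge 3$. Every unfolded simplicial $d$-manifold that is not a single $d$-simplex has an even scaffold.
   Context: A simplicial $d$-manifold is a finite simplicial complex homeomorphic to a $d$-dimensional manifold, possibly with boundary; its $d$-simplices are called facets and its $(d-1)$-simplices ridges. The dual $1$-skeleton $\mathcal{M}^*$ has a node for each facet and an arc between two facets sharing a ridge. A simplicial manifold is unfolded if its dual $1$-skeleton is a tree. The (vertex-facet) incidence graph has a node for every vertex and every facet, with an arc $(v,f)$ whenever $v$ is a vertex of $f$. An even scaffold is a subgraph of the incidence graph containing every facet node, in which every facet node has degree exactly $2$ and every vertex node has even degree. (The empty complex has the empty even scaffold.) *)

From HB Require Import structures.
From mathcomp Require Import all_boot all_order all_algebra.
From mathcomp Require Import all_classical all_reals topology normedtype.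

Set Implicit Arguments.
Unset Strict Implicit.
Unset Printing Implicit Defensive.

Import Order.TTheory GRing.Theory Num.Theory.
Import numFieldNormedType.Exports.
Local Open Scope classical_set_scope.
Local Open Scope ring_scope.

Definition simplicial_complex (n : nat) (K : {set {set 'I_n}}) : Prop :=
  finset.set0 \notin K /\
  forall s t : {set 'I_n}, s \in K -> t \subset s -> t != finset.set0 -> t \in K.

Definition facets (n d : nat) (K : {set {set 'I_n}}) : {set {set 'I_n}} :=
  [set s in K | #|s| == d.+1]%N.
Definition ridges (n d : nat) (K : {set {set 'I_n}}) : {set {set 'I_n}} :=
  [set s in K | #|s| == d]%N.

(** Standard geometric realization in R^n (barycentric coordinates). *)
Definition realization (R : realType) (n : nat) (K : {set {set 'I_n}})
  : set 'rV[R]_n :=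
  [set x | (forall i, 0 <= x ord0 i) /\ (\sum_i x ord0 i = 1) /\
           exists2 s, s \in K & forall i, i \notin s -> x ord0 i = 0].

Definition halfspace (R : realType) (d : nat) : set 'rV[R]_d :=
  [set y | forall i : 'I_d, nat_of_ord i = 0%N -> 0 <= y ord0 i].

Definition homeomorphic (T1 T2 : topologicalType) (A : set T1) (B : set T2) : Prop :=
  exists (f : T1 -> T2) (g : T2 -> T1),
    (forall x, A x -> B (f x)) /\ (forall y, B y -> A (g y)) /\
    (forall x, A x -> g (f x) = x) /\ (forall y, B y -> f (g y) = y) /\
    {within A, continuous f} /\ {within B, continuous g}.

Definition manifold_with_boundary (R : realType) (d : nat) (T : topologicalType)
  (X : set T) : Prop :=
  forall p, X p -> exists (W : set T) (O : set 'rV[R]_d),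
    open W /\ W p /\ open O /\
    homeomorphic (X `&` W) (@halfspace R d `&` O).

Definition simplicial_manifold (R : realType) (n d : nat) (K : {set {set 'I_n}}) : Prop :=
  simplicial_complex K /\ @manifold_with_boundary R d _ (@realization R n K).

Definition dual_adj (n d : nat) (K : {set {set 'I_n}}) : rel {set 'I_n} :=
  fun f g => [&& f \in facets d K, g \in facets d K, f != g &
                 (f :&: g) \in ridges d K].

Definition is_tree (T : finType) (N : {set T}) (e : rel T) : Prop :=
  (forall x y, x \in N -> y \in N -> connect e x y) /\
  (forall p : seq T, ucycle e p -> (size p < 3)%N).

Definition unfolded (n d : nat) (K : {set {set 'I_n}}) : Prop :=
  is_tree (facets d K) (dual_adj d K).

Definition even_scaffold (n d : nat) (K : {set {set 'I_n}})
  (E : {set 'I_n * {set 'I_n}}) : Prop :=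
  (forall v f, (v, f) \in E -> [/\ [set v]%SET \in K, f \in facets d K & v \in f]) /\
  (forall f, f \in facets d K -> #|[set v | (v, f) \in E]| = 2%N) /\
  (forall v, [set v]%SET \in K -> ~~ odd #|[set f | (v, f) \in E]|).

From mathcomp Require Import all_classical all_reals topology normedtype.
From mathcomp Require Import all_boot all_order all_algebra zify.

Set Implicit Arguments.
Unset Strict Implicit.
Unset Printing Implicit Defensive.

(* In the dual graph of a simplicial d-manifold, d >= 3, the facets adjacent to
   a facet c meet c in ridges, and any two of these ridges share at least
   d - 1 >= 2 vertices of c.  So on a star of the dual graph one can choose an
   edge in every facet such that each vertex lies on an even number of chosen
   edges: leaves are paired off with a common edge, and the centre joins the
   last one or two leaves.  The dual graph of an unfolded manifold that is not
   a single simplex is connected, hence has no isolated node, so its node set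
   is a disjoint union of stars; the chosen edges form an even scaffold. *)

Lemma card_subsetsI (T : finType) (A B C : {set T}) :
  A \subset C -> B \subset C -> #|A| + #|B| <= #|C| + #|A :&: B|.
Proof.
move=> AsubC BsubC.
by rewrite -cardsUI leq_add2r subset_leq_card // subUset AsubC BsubC.
Qed.

Lemma connected_neighbour (T : finType) (N : {set T}) (e : rel T) :
  (forall x y, x \in N -> y \in N -> connect e x y) ->
  (forall x y, e x y -> y \in N) -> #|N| != 1 ->
  {in N, forall x, exists2 y, y \in N & e x y}.
Proof.
move=> conn eN N1 x xN.
have /card_gt1P[a [b [aN bN ab]]] : 1 < #|N|.
  by rewrite ltn_neqAle eq_sym N1 card_gt0; apply/set0Pn; exists x.
have [y yN xy] : exists2 y, y \in N & x != y.
  by have [->|xa] := eqVneq x a; [exists b | exists a].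
case/connectP: (conn x y xN yN) => -[|z s] /=.
  by move=> _ yx; rewrite yx eqxx in xy.
by case/andP=> exz _ _; exists z; [apply: eN exz|].
Qed.

Section StarCover.

Variables (T : finType) (e : rel T).
Hypotheses (e_sym : symmetric e) (e_irr : irreflexive e).

Variable P : {set T} -> Prop.
Hypothesis P0 : P set0.
Hypothesis PU :
  forall A B : {set T}, [disjoint A & B] -> P A -> P B -> P (A :|: B).
Hypothesis Pstar : forall (c : T) (L : {set T}),
  c \notin L -> L != set0 -> {in L, forall l, e c l} -> P (c |: L).

Lemma double_star (f g : T) (I : {set T}) : e f g -> f \notin I -> g \notin I ->
  {in I, forall x, e f x || e g x} -> P (f |: (g |: I)).
Proof.
move=> efg fI gI efgI.
have fg : f != g by apply: contraTneq efg => ->; rewrite e_irr.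
set A := [set x in I | e f x]; set B := I :\: A.
have [B0|B_neq0] := eqVneq B set0.
  apply: Pstar; first by rewrite !inE negb_or fg.
    by apply/set0Pn; exists g; rewrite !inE eqxx.
  move=> x /setU1P[->|xI] //.
  by move/setP/(_ x): B0; rewrite !inE xI; case: (e f x).
have [A0|A_neq0] := eqVneq A set0.
  rewrite setUCA; apply: Pstar; first by rewrite !inE negb_or eq_sym fg.
    by apply/set0Pn; exists f; rewrite !inE eqxx.
  move=> x /setU1P[->|xI]; first by rewrite e_sym.
  have /orP[efx|//] := efgI x xI.
  by move/setP/(_ x): A0; rewrite !inE xI efx.
have -> : f |: (g |: I) = (f |: A) :|: (g |: B).
  apply/setP=> x; rewrite !inE.
  by case: (x \in I); case: (e f x); rewrite /= ?orbT ?orbF.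
apply: PU.
- apply/pred0P=> x /=; rewrite !inE.
  have [->|_] := eqVneq x f; first by rewrite (negbTE fg) (negbTE fI) !andbF.
  have [->|_] := eqVneq x g; first by rewrite (negbTE gI) !andbF.
  by case: (x \in I); case: (e f x); rewrite ?andbF.
- apply: Pstar => //; first by rewrite inE (negbTE fI).
  by move=> x; rewrite inE => /andP[].
- apply: Pstar => //; first by rewrite !inE (negbTE gI) andbF.
  move=> x; rewrite !inE => /andP[efx xI].
  by have /orP[efx'|//] := efgI x xI; rewrite xI efx' in efx.
Qed.

(* A graph without isolated nodes is a disjoint union of stars: remove an edge
   [f -- g] together with the nodes that it isolates; each of these is adjacent
   to f or g, and what remains again has no isolated node. *)
Lemma star_cover (S : {set T}) : {in S, forall x, exists2 y, y \in S & e x y} -> P S.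
Proof.
have [k] := ubnP #|S|; elim: k S => // k IH S ltSk noiso.
have [->|[f fS]] := set_0Vmem S; first exact: P0.
have [g gS efg] := noiso f fS.
set S' := S :\ f :\ g.
set I := [set x in S' | [forall y in S', ~~ e x y]].
have IS' : I \subset S' by apply/subsetP=> x; rewrite inE => /andP[].
have fS' : f \notin S' by rewrite !inE eqxx andbF.
have gS' : g \notin S' by rewrite !inE eqxx.
have -> : S = (S' :\: I) :|: (f |: (g |: I)).
  apply/setP=> x; rewrite in_setU in_setD !in_setU1.
  have [->|xf] := eqVneq x f; first by rewrite fS orbT.
  have [->|xg] := eqVneq x g; first by rewrite gS !orbT.
  rewrite !in_setD1 xf xg /=; case xI: (x \in I); rewrite /= ?orbF //.
  by move/subsetP/(_ x xI): IS'; rewrite !in_setD1 => /and3P[].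
apply: PU.
- apply/pred0P=> x /=; rewrite in_setD !in_setU1.
  have [->|_] := eqVneq x f; first by rewrite (negbTE fS') andbF.
  have [->|_] := eqVneq x g; first by rewrite (negbTE gS') andbF.
  by case: (x \in I); rewrite ?andbF.
- apply: IH.
    suff : S' :\: I \proper S by move/proper_card; lia.
    apply/properP; split; last by exists f; rewrite // in_setD (negbTE fS') andbF.
    by apply/subsetP=> x /setDP[/setD1P[_ /setD1P[]]].
  move=> x /setDP[xS' xI].
  have /forall_inPn[y yS' exy] : ~~ [forall y in S', ~~ e x y].
    by move: xI; rewrite /I inE xS'.
  exists y; last by rewrite negbK in exy.
  rewrite in_setD yS' andbT /I inE yS' /=.
  by apply/forall_inPn; exists x; rewrite // e_sym.
- apply: double_star => //; first by apply: contra fS'; apply: subsetP.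
    by apply: contra gS'; apply: subsetP.
  move=> x /[dup] xI; rewrite /I inE => /andP[xS' /forall_inP xiso].
  have xS : x \in S by move: xS'; rewrite /S' !in_setD1 => /and3P[].
  have [y yS exy] := noiso x xS.
  have : y \notin S' by apply: contraL exy; apply: xiso.
  rewrite /S' !inE yS andbT negb_and !negbK.
  by case/orP=> /eqP <-; rewrite [e y x]e_sym exy ?orbT.
Qed.

End StarCover.

Section EvenPairing.

Variable T : finType.

(* The two scaffold arcs at a facet [h] are encoded as the edge [p h] of [h]. *)
Definition even_pairing (F : {set {set T}}) (p : {set T} -> {set T}) : Prop :=
  {in F, forall h, p h \subset h /\ #|p h| = 2} /\
  forall v, ~~ odd (\sum_(h in F) (v \in p h)).

Definition has_even_pairing (F : {set {set T}}) : Prop :=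
  exists p, even_pairing F p.

Lemma has_even_pairing0 : has_even_pairing set0.
Proof. by exists (fun=> set0); split=> [h|v]; rewrite ?inE ?big_set0. Qed.

Lemma has_even_pairingU (A B : {set {set T}}) : [disjoint A & B] ->
  has_even_pairing A -> has_even_pairing B -> has_even_pairing (A :|: B).
Proof.
move=> AB [pA [pAsub pAeven]] [pB [pBsub pBeven]].
exists (fun h => if h \in A then pA h else pB h); split.
  move=> h /setUP[hA|hB]; first by rewrite hA; apply: pAsub.
  by rewrite (disjointFl AB hB); apply: pBsub.
move=> v; rewrite (eq_bigl [predU A & B]) => [|h]; last by rewrite !inE.
set q := fun h => if h \in A then pA h else pB h.
have sumA : \sum_(h in A) (v \in q h) = \sum_(h in A) (v \in pA h).
  by apply: eq_bigr => h; rewrite /q => ->.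
have sumB : \sum_(h in B) (v \in q h) = \sum_(h in B) (v \in pB h).
  by apply: eq_bigr => h hB; rewrite /q (disjointFl AB hB).
by rewrite bigU //= sumA sumB oddD (negbTE (pAeven v)) (negbTE (pBeven v)).
Qed.

Lemma has_even_pairing_pair (a b : {set T}) : a != b -> 1 < #|a :&: b| ->
  has_even_pairing [set a; b].
Proof.
move=> ab /card_gt1P[x [y [/setIP[xa xb] /setIP[ya yb] xy]]].
exists (fun=> [set x; y]); split.
  by move=> h /set2P[]->; rewrite cards2 xy subUset !sub1set ?xa ?ya ?xb ?yb.
by move=> v; rewrite big_setU1 ?inE // big_set1 /= addnn odd_double.
Qed.

(* The edges bz, ab, az of the triangle abz, on c, l1, l2 respectively. *)
Lemma has_even_pairing_triangle (c l1 l2 : {set T}) :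
  c != l1 -> c != l2 -> l1 != l2 ->
  1 < #|c :&: l1 :&: l2| -> 2 < #|c :&: l2| ->
  has_even_pairing (c |: [set l1; l2]).
Proof.
move=> cl1 cl2 l12 /card_gt1P[a [b [abI baI ab]]] c2_gt2.
have [z /setIP[zc zl2] zab] : exists2 z, z \in c :&: l2 & z \notin [set a; b].
  apply/subsetPn; apply: contraTN c2_gt2 => /subset_leq_card.
  by rewrite cards2 ab -leqNgt.
move: abI baI zab; rewrite !inE negb_or.
move=> /andP[/andP[ac al1] al2] /andP[/andP[bc bl1] bl2] /andP[za zb].
exists (fun h => if h == c then [set b; z]
                 else if h == l1 then [set a; b] else [set a; z]); split.
  move=> h /setU1P[->|/set2P[]->].
  - by rewrite eqxx cards2 subUset !sub1set bc zc eq_sym zb.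
  - by rewrite eq_sym (negbTE cl1) eqxx cards2 subUset !sub1set al1 bl1 ab.
  - rewrite eq_sym (negbTE cl2) eq_sym (negbTE l12).
    by rewrite cards2 subUset !sub1set al2 zl2 eq_sym za.
move=> v; rewrite big_setU1 ?inE ?negb_or ?cl1 ?cl2 //.
rewrite big_setU1 ?inE // big_set1 /=.
rewrite eqxx (eq_sym l1) (negbTE cl1) eqxx (eq_sym l2) (negbTE cl2).
rewrite eq_sym (negbTE l12) !inE.
have [->|va] := eqVneq v a; first by rewrite (negbTE ab) eq_sym (negbTE za).
have [->|vb] := eqVneq v b; first by rewrite eq_sym (negbTE zb).
by case: (v == z).
Qed.

(* Pair off the leaves two at a time; one or two remaining leaves are covered
   together with the centre by a pair or a triangle. *)
Lemma has_even_pairing_star (c : {set T}) (L : {set {set T}}) :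
  c \notin L -> L != set0 ->
  {in L, forall l, 2 < #|c :&: l|} ->
  {in L &, forall l1 l2, 1 < #|c :&: l1 :&: l2|} ->
  has_even_pairing (c |: L).
Proof.
have [k] := ubnP #|L|; elim: k L => // k IH L ltLk cL L0 big2 big3.
have [L_ge3|] := leqP 3 #|L|.
  have [l1 [l2 [l1L l2L l12]]] := card_gt1P (ltnW L_ge3).
  set L' := L :\ l1 :\ l2.
  have ->: c |: L = (c |: L') :|: [set l1; l2].
    apply/setP=> h; rewrite !inE.
    have [->|_] := eqVneq h l1; first by rewrite l1L !orbT.
    have [->|_] := eqVneq h l2; first by rewrite l2L !orbT.
    by rewrite /= !orbF.
  have cardL' : #|L'| = #|L| - 2.
    have := cardsD1 l1 L; have := cardsD1 l2 (L :\ l1).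
    by rewrite /L' l1L in_setD1 eq_sym l12 l2L /=; lia.
  have L'L : L' \subset L by apply: subset_trans (subD1set _ _) (subD1set _ _).
  apply: has_even_pairingU.
  - apply/pred0P=> h /=; rewrite in_setU1 /L' !in_setD1 !inE.
    have [->|_] := eqVneq h l1.
      by rewrite (negbTE (memPn cL _ l1L)) /= andbF.
    have [->|_] := eqVneq h l2; first by rewrite (negbTE (memPn cL _ l2L)).
    by rewrite /= andbF.
  - apply: IH; first by rewrite cardL'; lia.
    + by apply: contra cL; apply: subsetP.
    + by rewrite -card_gt0 cardL'; lia.
    + by move=> l /(subsetP L'L); apply: big2.
    + by move=> l l' /(subsetP L'L) lL /(subsetP L'L); apply: big3.
  - apply: has_even_pairing_pair => //.
    apply: leq_trans (big3 l1 l2 l1L l2L) _.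
    by apply: subset_leq_card; rewrite -setIA subsetIr.
move: L0; rewrite -card_gt0 => L_gt0 L_lt3.
have [/cards1P[l eL]|/cards2P[l1 [l2 [l12 eL]]]] :
    #|L| == 1 \/ #|L| == 2 by lia.
  subst L.
  apply: has_even_pairing_pair; first by apply: contraNneq cL => ->; apply: set11.
  by have := big3 l l (set11 l) (set11 l); rewrite -setIA setIid.
subst L.
have l1L : l1 \in [set l1; l2] by rewrite set21.
have l2L : l2 \in [set l1; l2] by rewrite set22.
apply: has_even_pairing_triangle => //.
- by apply: contra cL => /eqP->.
- by apply: contra cL => /eqP->.
- exact: big3.
- exact: big2.
Qed.

End EvenPairing.

Section DualGraph.

Variables (n d : nat) (K : {set {set 'I_n}}).

Lemma dual_adj_sym : symmetric (dual_adj d K).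
Proof.
move=> f g; rewrite /dual_adj setIC eq_sym.
by case: (f \in facets d K); case: (g \in facets d K).
Qed.

Lemma dual_adj_irr : irreflexive (dual_adj d K).
Proof. by move=> f; rewrite /dual_adj eqxx !andbF. Qed.

Lemma card_dual_adjI (c l : {set 'I_n}) : dual_adj d K c l -> #|c :&: l| = d.
Proof. by case/and4P=> _ _ _; rewrite inE => /andP[_ /eqP]. Qed.

Lemma card_facet (f : {set 'I_n}) : f \in facets d K -> #|f| = d.+1.
Proof. by rewrite inE => /andP[_ /eqP]. Qed.

Lemma card_dual_adjI3 (c l1 l2 : {set 'I_n}) :
  dual_adj d K c l1 -> dual_adj d K c l2 -> d.-1 <= #|c :&: l1 :&: l2|.
Proof.
move=> cl1 cl2; have [cK _ _ _] := and4P cl1.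
have := card_subsetsI (subsetIl c l1) (subsetIl c l2).
rewrite setIACA setIid setIA (card_facet cK).
by rewrite (card_dual_adjI cl1) (card_dual_adjI cl2); lia.
Qed.

Lemma has_even_pairing_dual_star (c : {set 'I_n}) (L : {set {set 'I_n}}) :
  2 < d -> c \notin L -> L != set0 -> {in L, forall l, dual_adj d K c l} ->
  has_even_pairing (c |: L).
Proof.
move=> d_gt2 cL L0 cLadj; apply: has_even_pairing_star => // [l lL|l1 l2 l1L l2L].
  by rewrite card_dual_adjI ?cLadj.
by apply: leq_trans (card_dual_adjI3 (cLadj _ l1L) (cLadj _ l2L)); lia.
Qed.

Lemma even_scaffold_of_pairing : simplicial_complex K ->
  has_even_pairing (facets d K) -> exists E, even_scaffold d K E.
Proof.
move=> [_ Kdown] [p [psub peven]].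
set E := [set x | (x.2 \in facets d K) && (x.1 \in p x.2)].
have inE_E v f : (v, f) \in E = (f \in facets d K) && (v \in p f) by rewrite in_set.
exists E; split; [|split].
- move=> v f; rewrite inE_E => /andP[fF vp].
  have vf : v \in f by apply: subsetP (psub f fF).1 _ vp.
  split=> //; apply: (Kdown f); rewrite ?sub1set //.
    by move: fF; rewrite inE => /andP[].
  by apply/set0Pn; exists v; rewrite set11.
- move=> f fF; rewrite -(psub f fF).2; apply: eq_card => v.
  by rewrite unfold_in /classical_sets.in_set asboolb inE_E fF.
- (* the degree sets in [even_scaffold] are classical sets, read through [in_set] *)
  move=> v _; suff -> : #|[set f | (v, f) \in E]%classic| =
                        \sum_(h in facets d K) (v \in p h) by apply: peven.
  transitivity (\sum_(h | (h \in facets d K) && (v \in p h)) 1).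
    rewrite sum1dep_card; apply: eq_card => h.
    by rewrite unfold_in /classical_sets.in_set asboolb inE_E in_set.
  by rewrite big_mkcondr; apply: eq_bigr => h _; case: (v \in p h).
Qed.

End DualGraph.

Theorem lemma6 (R : realType) (n d : nat) (K : {set {set 'I_n}}) :
  (3 <= d)%N ->
  simplicial_manifold R d K ->
  unfolded d K ->
  #|facets d K| <> 1%N ->
  exists E : {set 'I_n * {set 'I_n}}, even_scaffold d K E.
Proof.
move=> d_ge3 [Kcx _] [Kconn _] /eqP F1.
apply: even_scaffold_of_pairing Kcx _.
apply: (star_cover (@dual_adj_sym n d K) (@dual_adj_irr n d K)).
- exact: has_even_pairing0.
- exact: has_even_pairingU.
- by move=> c L; apply: has_even_pairing_dual_star.
- apply: connected_neighbour Kconn _ F1.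
  by move=> f g /and4P[].
Qed.
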